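(* Let $\gamma=(\gamma_1,\gamma_2,\gamma_3):[a,b]\to E(1,1)$ be a Euclidean $C^2$-smooth regular curve and $t\in[a,b]$. Set $B=-e^{-\gamma_3}\dot\gamma_1+e^{\gamma_3}\dot\gamma_2$, $B'=\ddot\gamma_2e^{\gamma_3}+\dot\gamma_2\dot\gamma_3e^{\gamma_3}-\ddot\gamma_1e^{-\gamma_3}+\dot\gamma_1\dot\gamma_3e^{-\gamma_3}$, $S=\frac12B^2+\dot\gamma_3^2$, and $\omega(\dot\gamma(t))=-\frac{\sqrt2}{2}(e^{-\gamma_3}\dot\gamma_1+e^{\gamma_3}\dot\gamma_2)$. (i) If $\omega(\dot\gamma(t))\ne0$, then $k^\infty_\gamma=\lim_{L\to+\infty}k^L_\gamma$ exists and equals $\dfrac{\sqrt{\frac12B^2+\dot\gamma_3^2}}{|\omega(\dot\gamma(t))|}$. (ii) If $\omega(\dot\gamma(t))=0$ and $\frac{d}{dt}\omega(\dot\gamma(t))=0$, then the limit exists and $$k^\infty_\gamma=\left\{\frac{\ddot\gamma_3^2+\frac12 (B')^2}{S^2}-\frac{\big(\dot\gamma_3\ddot\gamma_3+\frac12BB'\big)^2}{S^3}\right\}^{1/2}.$$ (iii) If $\omega(\dot\gamma(t))=0$ and $\frac{d}{dt}\omega(\dot\gamma(t))\ne0$, then $\displaystyle\lim_{L\to+\infty}\frac{k^L_\gamma}{\sqrt L}=\frac{|\frac{d}{dt}\omega(\dot\gamma(t))|}{\frac12B^2+\dot\gamma_3^2}$.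
   Context: $E(1,1)$ (the group of rigid motions of the Minkowski plane) is modelled on $\mathbb R^3$ with coordinates $(x_1,x_2,x_3)$ and vector fields $X_1=\partial_{x_3}$, $X_2=\frac{1}{\sqrt2}(-e^{x_3}\partial_{x_1}+e^{-x_3}\partial_{x_2})$, $X_3=-\frac1{\sqrt2}(e^{x_3}\partial_{x_1}+e^{-x_3}\partial_{x_2})$, dual forms $\omega_1=dx_3$, $\omega_2=\frac1{\sqrt2}(-e^{-x_3}dx_1+e^{x_3}dx_2)$, $\omega=-\frac1{\sqrt2}(e^{-x_3}dx_1+e^{x_3}dx_2)$. For $L>0$, $g_L=\omega_1\otimes\omega_1+\omega_2\otimes\omega_2+L\,\omega\otimes\omega$ with Levi-Civita connection $\nabla^L$. Regular means $\dot\gamma\ne0$ everywhere. The curvature of $\gamma$ is $k^L_\gamma=\sqrt{\|\nabla^L_{\dot\gamma}\dot\gamma\|_L^2/\|\dot\gamma\|_L^4-\langle\nabla^L_{\dot\gamma}\dot\gamma,\dot\gamma\rangle_L^2/\|\dot\gamma\|_L^6}$ and $k^\infty_\gamma:=\lim_{L\to+\infty}k^L_\gamma$ when it exists. *)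

From Stdlib Require Import Reals Lra.
From Coquelicot Require Import Coquelicot.
Open Scope R_scope.

(* Points and tangent vectors of R^3 = E(1,1): coordinates indexed by
   0,1,2 (standing for x_1,x_2,x_3). *)
Definition vec := nat -> R.
Definition sum3 (f : nat -> R) : R := f 0%nat + f 1%nat + f 2%nat.

(* Left-invariant frame: X 0 = X_1, X 1 = X_2, X 2 = X_3 (coordinate components). *)
Definition X (k : nat) (x : vec) : vec :=
  match k with
  | 0%nat => fun i => match i with 2%nat => 1 | _ => 0 end
  | 1%nat => fun i => match i with
                      | 0%nat => - exp (x 2%nat) / sqrt 2
                      | 1%nat => exp (- x 2%nat) / sqrt 2
                      | _ => 0 end
  | _ => fun i => match i with
                  | 0%nat => - (exp (x 2%nat) / sqrt 2)
                  | 1%nat => - (exp (- x 2%nat) / sqrt 2)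
                  | _ => 0 end
  end.

(* Dual coframe: om 0 = omega_1, om 1 = omega_2, om 2 = omega. *)
Definition om (k : nat) (x : vec) (v : vec) : R :=
  match k with
  | 0%nat => v 2%nat
  | 1%nat => / sqrt 2 * (- exp (- x 2%nat) * v 0%nat + exp (x 2%nat) * v 1%nat)
  | _ => - / sqrt 2 * (exp (- x 2%nat) * v 0%nat + exp (x 2%nat) * v 1%nat)
  end.

Definition lam (L : R) (k : nat) : R := match k with 2%nat => L | _ => 1 end.

Definition gL (L : R) (x : vec) (u v : vec) : R :=
  sum3 (fun k => lam L k * om k x u * om k x v).

Definition dirD (Y : vec -> vec) (x v : vec) : vec :=
  fun i => Derive (fun s => Y (fun j => x j + s * v j) i) 0.
Definition dirDs (f : vec -> R) (x v : vec) : R :=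
  Derive (fun s => f (fun j => x j + s * v j)) 0.

Definition br (Y Z : vec -> vec) (x : vec) : vec :=
  fun i => dirD Z x (Y x) i - dirD Y x (Z x) i.

(* Koszul formula: g_L(nabla^L_{X_i} X_j, X_k) at x. *)
Definition koszul (L : R) (x : vec) (i j k : nat) : R :=
  / 2 * ( dirDs (fun y => gL L y (X j y) (X k y)) x (X i x)
        + dirDs (fun y => gL L y (X i y) (X k y)) x (X j x)
        - dirDs (fun y => gL L y (X i y) (X j y)) x (X k x)
        + gL L x (br (X i) (X j) x) (X k x)
        - gL L x (br (X i) (X k) x) (X j x)
        - gL L x (br (X j) (X k) x) (X i x)).

(* Christoffel symbols in the (g_L-orthogonal) frame:
   nabla^L_{X_i} X_j = sum_k Gam L x i j k X_k *)
Definition Gam (L : R) (x : vec) (i j k : nat) : R :=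
  koszul L x i j k / gL L x (X k x) (X k x).

Definition pt (gamma : nat -> R -> R) (t : R) : vec := fun i => gamma i t.
Definition vel (gamma : nat -> R -> R) (t : R) : vec := fun i => Derive (gamma i) t.

Definition hcomp (gamma : nat -> R -> R) (k : nat) (t : R) : R :=
  om k (pt gamma t) (vel gamma t).

Definition acc_comp (L : R) (gamma : nat -> R -> R) (t : R) (k : nat) : R :=
  Derive (hcomp gamma k) t
  + sum3 (fun i => sum3 (fun j =>
      hcomp gamma i t * hcomp gamma j t * Gam L (pt gamma t) i j k)).

Definition acc (L : R) (gamma : nat -> R -> R) (t : R) : vec :=
  fun i => sum3 (fun k => acc_comp L gamma t k * X k (pt gamma t) i).

Definition kappa (L : R) (gamma : nat -> R -> R) (t : R) : R :=
  let x := pt gamma t in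
  let v := vel gamma t in
  let A := acc L gamma t in
  let n := gL L x v v in
  sqrt (gL L x A A / n ^ 2 - (gL L x A v) ^ 2 / n ^ 3).

Definition C2 (f : R -> R) : Prop :=
  (forall s, ex_derive f s) /\ (forall s, ex_derive (Derive f) s) /\
  (forall s, continuous (Derive (Derive f)) s).

From Stdlib Require Import Reals Lra Lia FunctionalExtensionality.
From Coquelicot Require Import Coquelicot.
Open Scope R_scope.

(* In the frame X_1, X_2, X_3 every g_L is diagonal with constant coefficients
   (1, 1, L), and the only brackets are [X_1,X_2] = X_3 and [X_1,X_3] = X_2, so the
   Koszul formula gives constant Christoffel symbols.  Hence, writing h_i for the
   frame components of the velocity (h_3 = omega(gamma')) and p_i for their
   derivatives, (k^L)^2 is an explicit rational function of L, h_i and p_i.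
   Substituting u = 1/L turns (k^L)^2 -- or (k^L)^2 / L when h_3 = 0 and p_3 <> 0 --
   into a rational function of u whose denominator does not vanish at u = 0
   (because h_3 <> 0, resp. h_1^2 + h_2^2 > 0 by regularity), and the limit is its
   value at u = 0. *)

Ltac field_sqrt2 :=
  pose proof (sqrt_sqrt 2 ltac:(lra)) as Hsqrt2;
  rewrite ?exp_Ropp; field [Hsqrt2]; repeat split; auto using sqrt2_neq_0, exp_neq_0.

(* X k depends on x only through x_3; dX3 k x is its x_3-derivative. *)
Definition dX3 (k : nat) (x : vec) : vec :=
  match k with 0%nat => fun _ => 0 | 1%nat => X 2 x | _ => X 1 x end.

Lemma dirD_X k x v i : dirD (X k) x v i = v 2%nat * dX3 k x i.
Proof.
  unfold dirD.
  destruct k as [|[|k]]; destruct i as [|[|[|i]]]; simpl;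
    try (rewrite Derive_const; ring).
  all: apply is_derive_unique; auto_derive; auto.
  all: rewrite Rmult_0_l, ?Rplus_0_r; field_sqrt2.
Qed.

(* Indices 0, 1, 2 stand for X_1, X_2, X_3: [X_1,X_2] = X_3 and [X_1,X_3] = X_2. *)
Definition struct_const (i j k : nat) : R :=
  match i, j, k with
  | 0%nat, 1%nat, 2%nat => 1 | 1%nat, 0%nat, 2%nat => -1
  | 0%nat, 2%nat, 1%nat => 1 | 2%nat, 0%nat, 1%nat => -1
  | _, _, _ => 0
  end.

Lemma br_X i j x : (i < 3)%nat -> (j < 3)%nat ->
  br (X i) (X j) x = fun m => sum3 (fun k => struct_const i j k * X k x m).
Proof.
  intros Hi Hj. apply functional_extensionality; intro m.
  unfold br. rewrite !dirD_X.
  destruct i as [|[|[|i]]]; try lia; destruct j as [|[|[|j]]]; try lia;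
    destruct m as [|[|[|m]]]; unfold sum3, struct_const, dX3, X; simpl; ring.
Qed.

Lemma om_X m k x : (m < 3)%nat -> (k < 3)%nat ->
  om m x (X k x) = if Nat.eqb m k then 1 else 0.
Proof.
  intros Hm Hk.
  destruct m as [|[|[|m]]]; try lia; destruct k as [|[|[|k]]]; try lia;
    unfold om, X; simpl; field_sqrt2.
Qed.

Lemma om_frame_comb m x (a : nat -> R) : (m < 3)%nat ->
  om m x (fun i => sum3 (fun k => a k * X k x i)) = a m.
Proof.
  intros Hm.
  destruct m as [|[|[|m]]]; try lia; unfold om, sum3, X; simpl; field_sqrt2.
Qed.

Lemma frame_expansion x v i : (i < 3)%nat ->
  v i = sum3 (fun k => om k x v * X k x i).
Proof.
  intros Hi.
  destruct i as [|[|[|i]]]; try lia; unfold om, sum3, X; simpl; field_sqrt2.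
Qed.

Lemma gL_frame_comb L x (a : nat -> R) k : (k < 3)%nat ->
  gL L x (fun i => sum3 (fun j => a j * X j x i)) (X k x) = lam L k * a k.
Proof.
  intros Hk. unfold gL. unfold sum3 at 1. rewrite !om_frame_comb, !om_X by lia.
  destruct k as [|[|[|k]]]; try lia; simpl; ring.
Qed.

Lemma gL_X L x j k : (j < 3)%nat -> (k < 3)%nat ->
  gL L x (X j x) (X k x) = if Nat.eqb j k then lam L k else 0.
Proof.
  intros Hj Hk. unfold gL, sum3. rewrite !om_X by lia.
  destruct j as [|[|[|j]]]; try lia; destruct k as [|[|[|k]]]; try lia; simpl; ring.
Qed.

Lemma dirDs_gL_X L x v j k : (j < 3)%nat -> (k < 3)%nat ->
  dirDs (fun y => gL L y (X j y) (X k y)) x v = 0.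
Proof.
  intros Hj Hk. unfold dirDs.
  rewrite (Derive_ext _ (fun _ => if Nat.eqb j k then lam L k else 0)).
  - apply Derive_const.
  - intro s. apply gL_X; assumption.
Qed.

(* Koszul formula for a frame with constant structure constants in which the metric
   is diagonal with constant coefficients lam L k. *)
Definition christoffel (L : R) (i j k : nat) : R :=
  (lam L k * struct_const i j k - lam L j * struct_const i k j
   - lam L i * struct_const j k i) / (2 * lam L k).

Lemma Gam_christoffel L x i j k : 0 < L -> (i < 3)%nat -> (j < 3)%nat -> (k < 3)%nat ->
  Gam L x i j k = christoffel L i j k.
Proof.
  intros HL Hi Hj Hk. unfold Gam, koszul, christoffel.
  rewrite !dirDs_gL_X, !br_X, !gL_frame_comb, gL_X, Nat.eqb_refl by assumption.
  assert (lam L k <> 0) by (destruct k as [|[|[|k]]]; simpl; lra).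
  field; assumption.
Qed.

Lemma om_acc L gamma t m : (m < 3)%nat ->
  om m (pt gamma t) (acc L gamma t) = acc_comp L gamma t m.
Proof. apply om_frame_comb. Qed.

Section AccelerationComponents.
Variables (L : R) (gamma : nat -> R -> R) (t : R).
Hypothesis HL : 0 < L.
Let h k := hcomp gamma k t.
Let p k := Derive (hcomp gamma k) t.

Ltac expand_acc_comp :=
  unfold acc_comp, sum3; rewrite !Gam_christoffel by (assumption || lia);
  cbv beta iota delta [christoffel struct_const lam h p]; field; lra.

Lemma acc_comp0 : acc_comp L gamma t 0 = p 0%nat + (L + 1) * h 1%nat * h 2%nat.
Proof. expand_acc_comp. Qed.

Lemma acc_comp1 : acc_comp L gamma t 1 = p 1%nat - L * h 0%nat * h 2%nat.
Proof. expand_acc_comp. Qed.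

Lemma acc_comp2 : acc_comp L gamma t 2 = p 2%nat - h 0%nat * h 1%nat / L.
Proof. expand_acc_comp. Qed.

End AccelerationComponents.

(* (k^L)^2 in terms of the frame components h_i of the velocity and their derivatives
   p_i; a0, a1, a2 are the frame components of the acceleration (acc_comp0-2). *)
Definition kappa_alg (L h0 h1 h2 p0 p1 p2 : R) : R :=
  let a0 := p0 + (L + 1) * h1 * h2 in
  let a1 := p1 - L * h0 * h2 in
  let a2 := p2 - h0 * h1 / L in
  let n := h0 ^ 2 + h1 ^ 2 + L * h2 ^ 2 in
  (a0 ^ 2 + a1 ^ 2 + L * a2 ^ 2) / n ^ 2 - (a0 * h0 + a1 * h1 + L * a2 * h2) ^ 2 / n ^ 3.

Lemma kappa_eq_alg L gamma t : 0 < L ->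
  kappa L gamma t =
  sqrt (kappa_alg L (hcomp gamma 0 t) (hcomp gamma 1 t) (hcomp gamma 2 t)
          (Derive (hcomp gamma 0) t) (Derive (hcomp gamma 1) t) (Derive (hcomp gamma 2) t)).
Proof.
  intros HL. unfold kappa, kappa_alg, gL, sum3, lam. cbv zeta.
  rewrite !om_acc, acc_comp0, acc_comp1, acc_comp2 by (assumption || lia).
  assert (Hn : forall a b c, 1 * a * a + 1 * b * b + L * c * c = a ^ 2 + b ^ 2 + L * c ^ 2)
    by (intros; ring).
  unfold hcomp. rewrite !Hn. f_equal. unfold Rdiv. ring.
Qed.

Lemma is_lim_pinfty_inv (f G : R -> R) :
  (forall L, 0 < L -> f L = G (/ L)) -> continuous G 0 -> is_lim f p_infty (G 0).
Proof.
  intros Hf HG. unfold is_lim.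
  apply filterlim_ext_loc with (fun L => G (/ L)).
  - exists 0. intros L HL. symmetry. apply Hf; lra.
  - eapply filterlim_comp; [|exact HG].
    apply (is_lim_inv (fun x => x) p_infty p_infty (is_lim_id p_infty)). discriminate.
Qed.

Ltac continuous_sqrt_rational :=
  apply continuous_sqrt_comp;
  apply (ex_derive_continuous (K := R_AbsRing) (V := R_NormedModule));
  auto_derive.

Section CurvatureLimits.
Variables (h0 h1 p0 p1 : R) (f : R -> R).
Let S := h0 ^ 2 + h1 ^ 2.

Lemma is_lim_kappa_alg_nonhorizontal h2 p2 :
  (forall L, 0 < L -> f L = sqrt (kappa_alg L h0 h1 h2 p0 p1 p2)) -> h2 <> 0 ->
  is_lim f p_infty (sqrt S / Rabs h2).
Proof.
  intros Hf H2.
  assert (Hh2 : 0 < h2 ^ 2) by (apply pow2_gt_0; exact H2).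
  assert (0 <= h0 ^ 2) by apply pow2_ge_0.
  assert (0 <= h1 ^ 2) by apply pow2_ge_0.
  set (F := fun u => ((p0*u + (1+u)*h1*h2)^2 + (p1*u - h0*h2)^2 + u*(p2 - h0*h1*u)^2)
          /(h0^2*u+h1^2*u+h2^2)^2
          - u*((p0*u+(1+u)*h1*h2)*h0 + (p1*u - h0*h2)*h1 + (p2 - h0*h1*u)*h2)^2
          /(h0^2*u+h1^2*u+h2^2)^3).
  replace (sqrt S / Rabs h2) with (sqrt (F 0)).
  - apply (is_lim_pinfty_inv f (fun u => sqrt (F u))).
    + intros L HL. rewrite Hf by exact HL. f_equal. unfold F, kappa_alg.
      assert (0 < / L) by (apply Rinv_0_lt_compat; exact HL).
      assert (0 < h0 ^ 2 * / L + h1 ^ 2 * / L + h2 ^ 2) by nra.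
      assert (0 < h0 ^ 2 + h1 ^ 2 + L * h2 ^ 2) by nra.
      field. repeat split; lra.
    + unfold F. continuous_sqrt_rational.
      rewrite !Rmult_0_r, !Rplus_0_l.
      repeat split; repeat apply Rmult_integral_contrapositive_currified; lra.
  - replace (F 0) with (S / h2 ^ 2) by (unfold F, S; field; lra).
    rewrite sqrt_div_alt, <- sqrt_Rsqr_abs by exact Hh2.
    unfold Rsqr. f_equal. f_equal. ring.
Qed.

Lemma is_lim_kappa_alg_horizontal :
  (forall L, 0 < L -> f L = sqrt (kappa_alg L h0 h1 0 p0 p1 0)) -> 0 < S ->
  is_lim f p_infty (sqrt ((p0 ^ 2 + p1 ^ 2) / S ^ 2 - (h0 * p0 + h1 * p1) ^ 2 / S ^ 3)).
Proof.
  intros Hf HS.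
  set (F := fun u => (p0^2 + p1^2 + h0^2*h1^2*u) / S^2 - (p0*h0 + p1*h1)^2 / S^3).
  replace ((p0^2 + p1^2)/S^2 - (h0*p0 + h1*p1)^2/S^3) with (F 0) by (unfold F; field; lra).
  apply (is_lim_pinfty_inv f (fun u => sqrt (F u))).
  - intros L HL. rewrite Hf by exact HL. f_equal. unfold F, kappa_alg. fold S. field. split; lra.
  - unfold F. continuous_sqrt_rational. lra.
Qed.

Lemma is_lim_kappa_alg_div_sqrt_horizontal p2 :
  (forall L, 0 < L -> f L = sqrt (kappa_alg L h0 h1 0 p0 p1 p2)) -> 0 < S -> p2 <> 0 ->
  is_lim (fun L => f L / sqrt L) p_infty (Rabs p2 / S).
Proof.
  intros Hf HS Hp2.
  set (F := fun u => ((p0^2 + p1^2)*u + (p2 - h0*h1*u)^2) / S^2 - u*(p0*h0 + p1*h1)^2 / S^3).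
  replace (Rabs p2 / S) with (sqrt (F 0)).
  - apply (is_lim_pinfty_inv _ (fun u => sqrt (F u))).
    + intros L HL. rewrite Hf, <- sqrt_div_alt by exact HL.
      f_equal. unfold F, kappa_alg. fold S. field. split; lra.
    + unfold F. continuous_sqrt_rational. lra.
  - replace (F 0) with ((p2 / S) ^ 2) by (unfold F; field; lra).
    rewrite <- Rsqr_pow2, sqrt_Rsqr_abs. unfold Rdiv.
    rewrite Rabs_mult, Rabs_inv, (Rabs_pos_eq S) by lra. reflexivity.
Qed.

End CurvatureLimits.

Lemma coframe_sqr_sum_pos x v : (exists i, (i < 3)%nat /\ v i <> 0) ->
  0 < om 0 x v ^ 2 + om 1 x v ^ 2 + om 2 x v ^ 2.
Proof.
  intros [i [Hi Hv]].
  destruct (Rlt_or_le 0 (om 0 x v ^ 2 + om 1 x v ^ 2 + om 2 x v ^ 2)) as [Hpos|Hle];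
    [exact Hpos|exfalso].
  assert (Hom : forall k, om k x v = 0 \/ (3 <= k)%nat).
  { intros [|[|[|k]]]; [left; nra|left; nra|left; nra|right; lia]. }
  apply Hv. rewrite (frame_expansion x v i Hi). unfold sum3.
  destruct (Hom 0%nat) as [-> | ?]; [|lia].
  destruct (Hom 1%nat) as [-> | ?]; [|lia].
  destruct (Hom 2%nat) as [-> | ?]; [|lia]. ring.
Qed.

Lemma Derive_hcomp1 gamma t :
  ex_derive (gamma 2%nat) t ->
  ex_derive (Derive (gamma 0%nat)) t -> ex_derive (Derive (gamma 1%nat)) t ->
  Derive (hcomp gamma 1) t =
  / sqrt 2 * (Derive (Derive (gamma 1%nat)) t * exp (gamma 2%nat t)
              + Derive (gamma 1%nat) t * Derive (gamma 2%nat) t * exp (gamma 2%nat t)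
              - Derive (Derive (gamma 0%nat)) t * exp (- gamma 2%nat t)
              + Derive (gamma 0%nat) t * Derive (gamma 2%nat) t * exp (- gamma 2%nat t)).
Proof.
  intros H2 H0 H1.
  apply is_derive_unique. unfold hcomp, om, pt, vel.
  auto_derive.
  - repeat split; assumption.
  - change (fun s => gamma 2%nat s) with (gamma 2%nat).
    change (fun s => Derive (gamma 0%nat) s) with (Derive (gamma 0%nat)).
    change (fun s => Derive (gamma 1%nat) s) with (Derive (gamma 1%nat)).
    ring.
Qed.

Lemma inv_sqrt2_mul_sqr x : (/ sqrt 2 * x) ^ 2 = / 2 * x ^ 2.
Proof. field_sqrt2. Qed.

Lemma inv_sqrt2_mul_mul x y : (/ sqrt 2 * x) * (/ sqrt 2 * y) = / 2 * x * y.
Proof. field_sqrt2. Qed.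

Theorem lemma5p3 (gamma : nat -> R -> R) (a b t : R) :
  a <= b ->
  (forall i, (i < 3)%nat -> C2 (gamma i)) ->
  (forall s, a <= s <= b ->
     exists i, (i < 3)%nat /\ Derive (gamma i) s <> 0) ->
  a <= t <= b ->
  let g1 := gamma 0%nat in let g2 := gamma 1%nat in let g3 := gamma 2%nat in
  let d1 := Derive g1 t in let d2 := Derive g2 t in let d3 := Derive g3 t in
  let dd1 := Derive (Derive g1) t in let dd2 := Derive (Derive g2) t in
  let dd3 := Derive (Derive g3) t in
  let e3 := exp (g3 t) in let em3 := exp (- g3 t) in
  let B := - em3 * d1 + e3 * d2 in
  let B' := dd2 * e3 + d2 * d3 * e3 - dd1 * em3 + d1 * d3 * em3 in
  let S := / 2 * B ^ 2 + d3 ^ 2 in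
  let w := fun s => om 2 (pt gamma s) (vel gamma s) in
  let dw := Derive w t in
  (w t <> 0 ->
     is_lim (fun L => kappa L gamma t) p_infty
       (sqrt (/ 2 * B ^ 2 + d3 ^ 2) / Rabs (w t))) /\
  (w t = 0 -> dw = 0 ->
     is_lim (fun L => kappa L gamma t) p_infty
       (sqrt ((dd3 ^ 2 + / 2 * B' ^ 2) / S ^ 2
              - (d3 * dd3 + / 2 * B * B') ^ 2 / S ^ 3))) /\
  (w t = 0 -> dw <> 0 ->
     is_lim (fun L => kappa L gamma t / sqrt L) p_infty
       (Rabs dw / (/ 2 * B ^ 2 + d3 ^ 2))).
Proof.
  intros _ HC Hreg Ht g1 g2 g3 d1 d2 d3 dd1 dd2 dd3 e3 em3 B B' S w dw.
  assert (Hp1 : Derive (hcomp gamma 1) t = / sqrt 2 * B').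
  { destruct (HC 0%nat) as [_ [H0 _]]; [lia|].
    destruct (HC 1%nat) as [_ [H1 _]]; [lia|].
    destruct (HC 2%nat) as [H2 _]; [lia|].
    exact (Derive_hcomp1 gamma t (H2 t) (H0 t) (H1 t)). }
  assert (Hkappa : forall L, 0 < L ->
    kappa L gamma t = sqrt (kappa_alg L d3 (/ sqrt 2 * B) (w t) dd3 (/ sqrt 2 * B') dw)).
  { intros L HL. rewrite kappa_eq_alg, Hp1 by exact HL. reflexivity. }
  assert (ES : S = d3 ^ 2 + (/ sqrt 2 * B) ^ 2).
  { unfold S. rewrite inv_sqrt2_mul_sqr. ring. }
  assert (HS : w t = 0 -> 0 < d3 ^ 2 + (/ sqrt 2 * B) ^ 2).
  { intros Hw. pose proof (coframe_sqr_sum_pos (pt gamma t) (vel gamma t) (Hreg t Ht)) as Hpos.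
    change (0 < d3 ^ 2 + (/ sqrt 2 * B) ^ 2 + w t ^ 2) in Hpos.
    rewrite Hw in Hpos. lra. }
  change (/ 2 * B ^ 2 + d3 ^ 2) with S. rewrite ES.
  split; [|split].
  - exact (is_lim_kappa_alg_nonhorizontal _ _ _ _ _ _ _ Hkappa).
  - intros Hw Hdw. rewrite Hw, Hdw in Hkappa.
    rewrite <- inv_sqrt2_mul_sqr, <- inv_sqrt2_mul_mul.
    exact (is_lim_kappa_alg_horizontal _ _ _ _ _ Hkappa (HS Hw)).
  - intros Hw Hdw. rewrite Hw in Hkappa.
    exact (is_lim_kappa_alg_div_sqrt_horizontal _ _ _ _ _ _ Hkappa (HS Hw) Hdw).
Qed.
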